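(* Let $0\le\beta<1$ and $\gamma=\frac34+\frac14\beta$, and let $C>0$. There exist constants $c>0$ and $N$ such that for all $n\ge N$, all integers $0\le k\le Cn^{\beta}$, and every multiset $\mathcal{C}$ of $n-k$ unlabelled graphs on $n-1$ vertices, there is a set $J\subseteq\{0,\dots,n-1\}$ with $|J|\ge n-cn^{\gamma}$ such that for any two graphs $G,H$ on $n$ vertices whose decks both contain $\mathcal{C}$ as a sub-multiset, $d_t(G)=d_t(H)$ for every $t\in J$. (That is, from any $n-k$ cards of a graph of order $n$, the number $d_t$ of vertices of degree $t$ can be determined exactly for all but $O(n^\gamma)$ values of $t$.)
   Context: All graphs are finite, simple and undirected. For a graph $G'$ and integer $t$, $d_t(G')$ is the number of vertices of degree $t$ in $G'$. For $v\in V(G)$, the card $G-v$ is obtained by deleting $v$ and its incident edges; the deck $\mathcal{D}(G)$ is the multiset of the $n$ cards $G-v$, $v\in V(G)$, up to isomorphism. *)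

From Stdlib Require Import Reals Arith List.
Import ListNotations.

(* A (labelled) graph on vertex set {0,...,n-1} is given by a boolean
   adjacency function; only its values on vertices < n matter. *)
Definition graph := nat -> nat -> bool.

Definition is_graph (n : nat) (g : graph) : Prop :=
  (forall i, i < n -> g i i = false) /\
  (forall i j, i < n -> j < n -> g i j = g j i).

Definition iso (m : nat) (g h : graph) : Prop :=
  exists f : nat -> nat,
    (forall i, i < m -> f i < m) /\
    (forall i j, i < m -> j < m -> f i = f j -> i = j) /\
    (forall i j, i < m -> j < m -> g i j = h (f i) (f j)).

(* the card G - v, relabelled onto {0,...,n-2} *)
Definition skip (v i : nat) : nat := if i <? v then i else S i.
Definition card (g : graph) (v : nat) : graph :=
  fun i j => g (skip v i) (skip v j).

(* the deck of G (on n vertices) contains the multiset Cs of unlabelled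
   graphs on n-1 vertices as a sub-multiset: the cards of Cs can be matched
   injectively with vertices v of G such that Cs_i is isomorphic to G - v. *)
Definition deck_contains (n : nat) (g : graph) (Cs : list graph) : Prop :=
  exists f : nat -> nat,
    (forall i, i < length Cs -> f i < n) /\
    (forall i j, i < length Cs -> j < length Cs -> f i = f j -> i = j) /\
    (forall i, i < length Cs -> iso (n - 1) (nth i Cs (fun _ _ => false)) (card g (f i))).

Definition degree (n : nat) (g : graph) (v : nat) : nat :=
  length (filter (fun u => g v u) (seq 0 n)).

Definition d_ (n : nat) (g : graph) (t : nat) : nat :=
  length (filter (fun v => Nat.eqb (degree n g v) t) (seq 0 n)).

From Stdlib Require Import Reals Bool Arith List Lia Lra ZArith Permutation.
From Stdlib Require Import Classical ClassicalEpsilon.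
Import ListNotations.

(* Deleting a vertex v lowers the degree of each neighbour of v by one, so
   d_t(G - v) = d_t(G) - [deg v = t] - e_t(v) + e_(t+1)(v), where e_s(v) counts the neighbours
   of v of degree s.  Summing over the m = n - k known cards gives Kelly's relation
   (m - t - 1) d_t + (t + 1) d_(t+1) = S_t up to an error O(k (1 + d_t + d_(t+1))), with S_t
   computable from the cards.  Hence for two graphs G, H with these cards the differences
   x_t = d_t(H) - d_t(G) obey a two-term recurrence whose coefficients differ by at least 2W
   unless t lies in a window of length O(k + W) around m/2: below the window |x_t| contracts
   by a factor 1 - 2W/n when t decreases, above it when t increases.  Writing U_t for the
   largest |x_t| over all such H, a contracting sequence starting below n with total error
   O(k n / W) vanishes except at O(W + n^3/W^3 + k n^3/W^4 + k n^2/W^2) indices.  With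
   W ~ n^gamma and k = O(n^beta) every term is O(n^gamma), and d_t is determined wherever
   U_t = 0. *)

Fixpoint nsum (f : nat -> nat) (l : list nat) : nat :=
  match l with [] => 0 | x :: r => f x + nsum f r end.

Lemma nsum_app f l1 l2 : nsum f (l1 ++ l2) = nsum f l1 + nsum f l2.
Proof. induction l1; simpl; lia. Qed.

Lemma nsum_ext_in f g l : (forall x, In x l -> f x = g x) -> nsum f l = nsum g l.
Proof. induction l as [|a l IH]; simpl; intros H; [reflexivity|]. rewrite H, IH; auto. Qed.

Lemma nsum_le_in f g l : (forall x, In x l -> f x <= g x) -> nsum f l <= nsum g l.
Proof.
  induction l as [|a l IH]; simpl; intros H; [lia|].
  specialize (IH (fun x h => H x (or_intror h))). specialize (H a (or_introl eq_refl)). lia.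
Qed.

Lemma nsum_add f g l : nsum (fun x => f x + g x) l = nsum f l + nsum g l.
Proof. induction l; simpl; lia. Qed.

Lemma nsum_perm f l1 l2 : Permutation l1 l2 -> nsum f l1 = nsum f l2.
Proof. induction 1; simpl; lia. Qed.

Lemma nsum_map f g l : nsum f (map g l) = nsum (fun x => f (g x)) l.
Proof. induction l; simpl; auto. Qed.

Lemma nsum_const c l : nsum (fun _ => c) l = c * length l.
Proof. induction l; simpl; lia. Qed.

Lemma nsum_mul_l c f l : nsum (fun x => c * f x) l = c * nsum f l.
Proof. induction l; simpl; lia. Qed.

Lemma nsum_filter f p l : nsum f (filter p l) = nsum (fun x => if p x then f x else 0) l.
Proof. induction l as [|a l IH]; simpl; auto. destruct (p a); simpl; lia. Qed.

Lemma length_filter_nsum p l : length (filter p l) = nsum (fun x => if p x then 1 else 0) l.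
Proof. rewrite <- (Nat.mul_1_l (length _)), <- nsum_const, nsum_filter. reflexivity. Qed.

Lemma nsum_swap F l1 l2 :
  nsum (fun x => nsum (F x) l2) l1 = nsum (fun y => nsum (fun x => F x y) l1) l2.
Proof.
  induction l1 as [|a l1 IH]; simpl.
  - induction l2; simpl; auto.
  - rewrite IH, <- nsum_add. reflexivity.
Qed.

Lemma in_le_nsum f l x : In x l -> f x <= nsum f l.
Proof. induction l as [|a l IH]; simpl; [tauto|]. intros [<-|H]; [lia|]. specialize (IH H); lia. Qed.

Lemma nsum_indicator_NoDup x l : NoDup l -> nsum (fun t => if Nat.eqb x t then 1 else 0) l <= 1.
Proof.
  induction 1 as [|a l Ha Hl IH]; simpl; [lia|].
  destruct (Nat.eqb_spec x a) as [<-|]; [|lia].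
  rewrite (nsum_ext_in _ (fun _ => 0)), nsum_const; [lia|].
  intros y Hy. destruct (Nat.eqb_spec x y); congruence.
Qed.

Lemma Permutation_map_seq m f : (forall i, i < m -> f i < m) ->
  (forall i j, i < m -> j < m -> f i = f j -> i = j) ->
  Permutation (map f (seq 0 m)) (seq 0 m).
Proof.
  intros Hf Hinj. apply NoDup_Permutation_bis.
  - apply NoDup_map_NoDup_ForallPairs; [|apply seq_NoDup].
    intros a b Ha Hb. apply in_seq in Ha, Hb. apply Hinj; lia.
  - rewrite length_map; lia.
  - intros x Hx. apply in_map_iff in Hx as [i [<- Hi]]. apply in_seq in Hi.
    apply in_seq. specialize (Hf i ltac:(lia)). lia.
Qed.

Lemma nsum_rev F N : nsum F (seq 0 N) = nsum (fun j => F (N - 1 - j)) (seq 0 N).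
Proof.
  rewrite <- (nsum_map F (fun j => N - 1 - j)).
  apply nsum_perm, Permutation_sym, Permutation_map_seq; intros; lia.
Qed.

Lemma nsum_seq_shift f a l : nsum f (seq a l) = nsum (fun j => f (a + j)) (seq 0 l).
Proof.
  revert f. induction a as [|a IH]; intros f; [reflexivity|].
  rewrite <- seq_shift, nsum_map, IH. reflexivity.
Qed.

Lemma nsum_seq_le f a l M : a + l <= M -> nsum f (seq a l) <= nsum f (seq 0 M).
Proof.
  intros H. replace M with (a + (l + (M - a - l))) by lia.
  rewrite (seq_app a), (seq_app l), !nsum_app. simpl. lia.
Qed.

Lemma nsum_lt_in f g l : l <> [] -> (forall x, In x l -> f x < g x) -> nsum f l < nsum g l.
Proof.
  induction l as [|a l IH]; intros Hl H; [congruence|]. simpl.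
  specialize (H a (or_introl eq_refl)) as Ha.
  destruct l as [|b l]; [simpl; lia|].
  specialize (IH ltac:(congruence) (fun x h => H x (or_intror h))). lia.
Qed.

Lemma nsum_injection_bounds n m (f F : nat -> nat) B :
  (forall i, i < m -> f i < n) ->
  (forall i j, i < m -> j < m -> f i = f j -> i = j) ->
  (forall v, v < n -> F v <= B) ->
  m <= n /\
  nsum (fun i => F (f i)) (seq 0 m) <= nsum F (seq 0 n) <=
  nsum (fun i => F (f i)) (seq 0 m) + (n - m) * B.
Proof.
  intros Hf Hinj HB.
  set (image := map f (seq 0 m)).
  set (p := fun v => if in_dec Nat.eq_dec v image then true else false).
  assert (Himage : Permutation image (filter p (seq 0 n))).
  { apply NoDup_Permutation.
    - apply NoDup_map_NoDup_ForallPairs; [|apply seq_NoDup].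
      intros a b Ha Hb. apply in_seq in Ha, Hb. apply Hinj; lia.
    - apply NoDup_filter, seq_NoDup.
    - intro x; rewrite filter_In, in_seq; unfold p.
      destruct (in_dec Nat.eq_dec x image) as [Hx|Hx]; [|intuition discriminate].
      split; [|tauto]. intros _. split; [|reflexivity].
      apply in_map_iff in Hx as [i [<- Hi]]. apply in_seq in Hi. specialize (Hf i ltac:(lia)). lia. }
  assert (Hsplit : forall G, nsum G (seq 0 n) =
            nsum G (filter p (seq 0 n)) + nsum G (filter (fun v => negb (p v)) (seq 0 n))).
  { intro G. rewrite !nsum_filter, <- nsum_add. apply nsum_ext_in. intros x _.
    destruct (p x); simpl; lia. }
  assert (Hcount := Hsplit (fun _ => 1)).
  rewrite !nsum_const, length_seq, <- (Permutation_length Himage) in Hcount.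
  unfold image in Hcount. rewrite length_map, length_seq in Hcount.
  assert (Hin : nsum F (filter p (seq 0 n)) = nsum (fun i => F (f i)) (seq 0 m)).
  { rewrite <- (nsum_perm _ _ _ Himage). apply nsum_map. }
  assert (Hout : nsum F (filter (fun v => negb (p v)) (seq 0 n)) <= (n - m) * B).
  { replace (n - m) with (length (filter (fun v => negb (p v)) (seq 0 n))) by lia.
    rewrite Nat.mul_comm, <- nsum_const. apply nsum_le_in.
    intros x Hx. apply filter_In in Hx as [Hx _]. apply in_seq in Hx. apply HB; lia. }
  rewrite (Hsplit F), Hin. lia.
Qed.

Lemma degree_nsum n g v : degree n g v = nsum (fun u => if g v u then 1 else 0) (seq 0 n).
Proof. apply length_filter_nsum. Qed.

Lemma d_nsum n g t : d_ n g t = nsum (fun v => if Nat.eqb (degree n g v) t then 1 else 0) (seq 0 n).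
Proof. apply length_filter_nsum. Qed.

Lemma d_le n g t : d_ n g t <= n.
Proof. unfold d_. rewrite <- (length_seq n 0) at 2. apply filter_length_le. Qed.

Lemma nsum_d_le n g l : NoDup l -> nsum (d_ n g) l <= n.
Proof.
  intros Hl. rewrite (nsum_ext_in _ _ _ (fun t _ => d_nsum n g t)), nsum_swap.
  rewrite <- (length_seq n 0) at 2. rewrite <- (Nat.mul_1_l (length _)), <- nsum_const.
  apply nsum_le_in. intros v _. apply nsum_indicator_NoDup; auto.
Qed.

Lemma d_iso m g h t : iso m g h -> d_ m g t = d_ m h t.
Proof.
  intros [f [Hf [Hinj Hgh]]].
  assert (Hp := Permutation_map_seq m f Hf Hinj).
  assert (Hdeg : forall i, i < m -> degree m g i = degree m h (f i)).
  { intros i Hi.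
    rewrite !degree_nsum, <- (nsum_perm (fun u => if h (f i) u then 1 else 0) _ _ Hp), nsum_map.
    apply nsum_ext_in. intros u Hu. apply in_seq in Hu. rewrite Hgh by lia. reflexivity. }
  rewrite !d_nsum, <- (nsum_perm (fun v => if Nat.eqb (degree m h v) t then 1 else 0) _ _ Hp).
  rewrite nsum_map.
  apply nsum_ext_in. intros u Hu. apply in_seq in Hu. rewrite Hdeg by lia. reflexivity.
Qed.

Lemma skip_neq v i : skip v i <> v.
Proof. unfold skip. destruct (Nat.ltb_spec i v); lia. Qed.

Lemma skip_lt n v i : v < n -> i < n - 1 -> skip v i < n.
Proof. unfold skip. destruct (Nat.ltb_spec i v); lia. Qed.

Lemma skip_inj v i j : skip v i = skip v j -> i = j.
Proof. unfold skip. destruct (Nat.ltb_spec i v), (Nat.ltb_spec j v); lia. Qed.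

Lemma Permutation_skip n v : v < n ->
  Permutation (v :: map (skip v) (seq 0 (n - 1))) (seq 0 n).
Proof.
  intros Hv. apply NoDup_Permutation_bis.
  - constructor.
    + intros H. apply in_map_iff in H as [i [H _]]. exact (skip_neq v i H).
    + apply NoDup_map_NoDup_ForallPairs; [|apply seq_NoDup].
      intros a b _ _. apply skip_inj.
  - simpl. rewrite length_map, !length_seq. lia.
  - intros x [<-|Hx]; [apply in_seq; lia|].
    apply in_map_iff in Hx as [i [<- Hi]]. apply in_seq in Hi.
    apply in_seq. specialize (skip_lt n v i Hv ltac:(lia)). lia.
Qed.

Lemma nsum_skip n v F : v < n ->
  nsum F (seq 0 n) = F v + nsum (fun i => F (skip v i)) (seq 0 (n - 1)).
Proof.
  intros Hv. rewrite <- (nsum_perm _ _ _ (Permutation_skip n v Hv)). simpl.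
  rewrite nsum_map. reflexivity.
Qed.

Definition nbrs_deg (n : nat) (g : graph) (t v : nat) : nat :=
  nsum (fun u => if g v u && Nat.eqb (degree n g u) t then 1 else 0) (seq 0 n).

Lemma nbrs_deg_le n g t v : nbrs_deg n g t v <= d_ n g t.
Proof.
  unfold nbrs_deg. rewrite d_nsum. apply nsum_le_in. intros u _.
  destruct (g v u), (Nat.eqb (degree n g u) t); simpl; lia.
Qed.

Lemma nsum_nbrs_deg n g t : is_graph n g -> nsum (nbrs_deg n g t) (seq 0 n) = t * d_ n g t.
Proof.
  intros [_ Hsym]. unfold nbrs_deg. rewrite nsum_swap, d_nsum, <- nsum_mul_l.
  apply nsum_ext_in. intros u Hu. apply in_seq in Hu.
  destruct (Nat.eqb_spec (degree n g u) t) as [<-|].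
  - rewrite Nat.mul_1_r, degree_nsum. apply nsum_ext_in. intros v Hv. apply in_seq in Hv.
    rewrite (Hsym v u) by lia. destruct (g u v); reflexivity.
  - rewrite Nat.mul_0_r, (nsum_ext_in _ (fun _ => 0)), nsum_const; [lia|].
    intros v _. destruct (g v u); reflexivity.
Qed.

Lemma degree_card n g v u : is_graph n g -> v < n -> u < n - 1 ->
  degree (n - 1) (card g v) u = degree n g (skip v u) - (if g v (skip v u) then 1 else 0).
Proof.
  intros [_ Hsym] Hv Hu.
  rewrite (degree_nsum n), (nsum_skip n v _ Hv), (Hsym _ v), degree_nsum by auto using skip_lt.
  unfold card. lia.
Qed.

Lemma degree_pos_of_adj n g v u : is_graph n g -> v < n -> u < n -> g v u = true ->
  1 <= degree n g u.
Proof.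
  intros [_ Hsym] Hv Hu E. rewrite degree_nsum.
  specialize (in_le_nsum (fun w => if g u w then 1 else 0) (seq 0 n) v ltac:(apply in_seq; lia)).
  simpl. rewrite (Hsym u v), E by lia. auto.
Qed.

(* Deleting v lowers exactly the degrees of the neighbours of v. *)
Lemma d_card n g v t : is_graph n g -> v < n ->
  d_ (n - 1) (card g v) t + (if Nat.eqb (degree n g v) t then 1 else 0) + nbrs_deg n g t v
  = d_ n g t + nbrs_deg n g (S t) v.
Proof.
  intros Hg Hv.
  set (shifted := fun u => if Nat.eqb (degree n g u - (if g v u then 1 else 0)) t then 1 else 0).
  assert (Hcard : nsum shifted (seq 0 n) =
      (if Nat.eqb (degree n g v) t then 1 else 0) + d_ (n - 1) (card g v) t).
  { rewrite (nsum_skip n v _ Hv), d_nsum. unfold shifted at 1.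
    rewrite (proj1 Hg v Hv), Nat.sub_0_r. f_equal. apply nsum_ext_in.
    intros u Hu. apply in_seq in Hu. unfold shifted. rewrite degree_card; auto; lia. }
  assert (Hpoint : nsum (fun u => shifted u + (if g v u && Nat.eqb (degree n g u) t then 1 else 0))
                        (seq 0 n)
      = nsum (fun u => (if Nat.eqb (degree n g u) t then 1 else 0)
                       + (if g v u && Nat.eqb (degree n g u) (S t) then 1 else 0)) (seq 0 n)).
  { apply nsum_ext_in. intros u Hu. apply in_seq in Hu. unfold shifted.
    destruct (g v u) eqn:E; simpl.
    - specialize (degree_pos_of_adj n g v u Hg Hv ltac:(lia) E).
      destruct (Nat.eqb_spec (degree n g u - 1) t), (Nat.eqb_spec (degree n g u) t),
               (Nat.eqb_spec (degree n g u) (S t)); lia.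
    - rewrite Nat.sub_0_r. lia. }
  rewrite !nsum_add, <- d_nsum in Hpoint. unfold nbrs_deg. lia.
Qed.

Definition card_count (n : nat) (Cs : list graph) (t : nat) : nat :=
  nsum (fun i => d_ (n - 1) (nth i Cs (fun _ _ => false)) t) (seq 0 (length Cs)).

(* Kelly's relation  sum_v d_t(G - v) = (n - t - 1) d_t + (t + 1) d_(t+1),  summed over only
   m of the n cards. *)
Lemma card_count_approx n g Cs t : is_graph n g -> deck_contains n g Cs ->
  let m := length Cs in let D := fun s => Z.of_nat (d_ n g s) in
  (Z.abs (Z.of_nat (card_count n Cs t) - ((Z.of_nat m - 1 - Z.of_nat t) * D t
                                         + (Z.of_nat t + 1) * D (S t)))
   <= Z.of_nat (n - m) * (1 + D t + D (S t)))%Z.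
Proof.
  intros Hg [f [Hf [Hinj Hiso]]] m D.
  set (at_t := fun v => (if Nat.eqb (degree n g v) t then 1 else 0) + nbrs_deg n g t v).
  assert (Hcards : nsum (fun i => d_ (n - 1) (card g (f i)) t + at_t (f i)) (seq 0 m)
                   = nsum (fun i => d_ n g t + nbrs_deg n g (S t) (f i)) (seq 0 m)).
  { apply nsum_ext_in. intros i Hi. apply in_seq in Hi. unfold at_t.
    rewrite Nat.add_assoc. apply d_card; auto. apply Hf. lia. }
  rewrite !nsum_add, nsum_const, length_seq in Hcards.
  assert (Hcount : nsum (fun i => d_ (n - 1) (card g (f i)) t) (seq 0 m) = card_count n Cs t).
  { apply nsum_ext_in. intros i Hi. apply in_seq in Hi. symmetry. apply d_iso, Hiso. lia. }
  destruct (nsum_injection_bounds n m f at_t (1 + d_ n g t) Hf Hinj) as [_ Hat].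
  { intros v _. unfold at_t. specialize (nbrs_deg_le n g t v).
    destruct (Nat.eqb (degree n g v) t); lia. }
  destruct (nsum_injection_bounds n m f (nbrs_deg n g (S t)) (d_ n g (S t)) Hf Hinj)
    as [_ Hnext].
  { intros v _. apply nbrs_deg_le. }
  assert (Hall : nsum at_t (seq 0 n) = d_ n g t + t * d_ n g t).
  { unfold at_t. rewrite nsum_add, <- d_nsum, nsum_nbrs_deg; auto. }
  rewrite nsum_nbrs_deg in Hnext by auto.
  unfold D. apply Z.abs_le. nia.
Qed.

Definition nonzero_count (u : nat -> nat) (l : list nat) : nat :=
  nsum (fun j => if Nat.eqb (u j) 0 then 0 else 1) l.

Lemma nonzero_count_le_length u l : nonzero_count u l <= length l.
Proof.
  unfold nonzero_count. rewrite <- (Nat.mul_1_l (length l)), <- nsum_const.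
  apply nsum_le_in. intros j _. destruct (Nat.eqb (u j) 0); lia.
Qed.

Lemma nonzero_count_le_nsum u l : nonzero_count u l <= nsum u l.
Proof. apply nsum_le_in. intros j _. destruct (Nat.eqb_spec (u j) 0); lia. Qed.

Lemma exists_le_average u L : 1 <= L -> exists j, j < L /\ L * u j <= nsum u (seq 0 L).
Proof.
  intros HL. apply NNPP. intros Hnone.
  assert (Hlt : nsum (fun _ => nsum u (seq 0 L)) (seq 0 L) < nsum (fun j => L * u j) (seq 0 L)).
  { apply nsum_lt_in; [destruct L; [lia|discriminate]|].
    intros j Hj. apply in_seq in Hj. apply Nat.nlt_ge. intros Hge. apply Hnone.
    exists j. split; [lia|]. lia. }
  rewrite nsum_const, nsum_mul_l, length_seq in Hlt. lia.
Qed.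

Lemma nonzero_count_le_prefix_tail u j M : j <= M ->
  nonzero_count u (seq 0 (S M)) <= j + 1 + nsum u (seq j (M - j)).
Proof.
  intros Hj. replace (seq 0 (S M)) with (seq 0 j ++ seq j (M - j) ++ [M]).
  2:{ rewrite seq_S, app_assoc, <- seq_app. f_equal. f_equal. lia. }
  unfold nonzero_count. rewrite !nsum_app.
  specialize (nonzero_count_le_length u (seq 0 j)).
  specialize (nonzero_count_le_nsum u (seq j (M - j))).
  specialize (nonzero_count_le_length u [M]).
  rewrite length_seq. unfold nonzero_count. simpl length. lia.
Qed.

(* u' <= (1 - D/A) u + g/A with D <= A <= n gives u' <= (1 - D/n) u + g/D; cleared of
   denominators. *)
Lemma contraction_step (A B : Z) (n D u u' g : nat) :
  (Z.of_nat D + B <= A <= Z.of_nat n)%Z -> (0 <= B)%Z -> 1 <= D ->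
  (A * Z.of_nat u' <= B * Z.of_nat u + Z.of_nat g)%Z ->
  n * D * u' + D * D * u <= n * D * u + n * g.
Proof.
  intros [HA HAn] HB HD H.
  assert (Hpos : (0 < A)%Z) by lia.
  enough (A * Z.of_nat (n * D * u' + D * D * u) <= A * Z.of_nat (n * D * u + n * g))%Z by nia.
  rewrite !Nat2Z.inj_add, !Nat2Z.inj_mul.
  set (zn := Z.of_nat n) in *. set (zD := Z.of_nat D) in *.
  set (zu := Z.of_nat u) in *. set (zu' := Z.of_nat u') in *. set (zg := Z.of_nat g) in *.
  assert (H1 : (A * zu' <= (A - zD) * zu + zg)%Z) by nia.
  assert (H2 : (zn * zD * (A * zu') <= zn * zD * ((A - zD) * zu + zg))%Z)
    by (apply Z.mul_le_mono_nonneg_l; lia).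
  assert (H3 : (zD * zD * zu * (A - zn) <= 0)%Z) by (apply Z.mul_nonneg_nonpos; lia).
  assert (H4 : (zn * zg * (zD - A) <= 0)%Z) by (apply Z.mul_nonneg_nonpos; lia).
  nia.
Qed.

Section Contraction.

Variables (u g : nat -> nat) (A B : nat -> Z) (n D M E : nat).
Hypothesis HD : 1 <= D.
Hypothesis Hcoef : forall j, j < M -> (Z.of_nat D + B j <= A j <= Z.of_nat n)%Z /\ (0 <= B j)%Z.
Hypothesis Hrec : forall j, j < M ->
  (A j * Z.of_nat (u (S j)) <= B j * Z.of_nat (u j) + Z.of_nat (g j))%Z.
Hypothesis Hu0 : u 0 <= n.
Hypothesis HE : nsum g (seq 0 M) <= E.

Lemma contraction_telescope a l : a + l <= M ->
  n * D * u (a + l) + D * D * nsum u (seq a l) <= n * D * u a + n * nsum g (seq a l).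
Proof.
  induction l as [|l IH]; intros Hl; [simpl; rewrite Nat.add_0_r; lia|].
  rewrite seq_S, !nsum_app. simpl. rewrite Nat.add_succ_r.
  destruct (Hcoef (a + l) ltac:(lia)) as [HA HB].
  specialize (contraction_step _ _ n D _ _ _ HA HB HD (Hrec (a + l) ltac:(lia))).
  specialize (IH ltac:(lia)). nia.
Qed.

(* After at most L steps some term is O(n (D n + E) / (L D^2)); from then on the terms have
   total mass O((n D u + n E) / D^2), and only terms with u > 0 are counted. *)
Lemma nonzero_count_contraction L : 1 <= L ->
  L * D ^ 3 * nonzero_count u (seq 0 (S M))
  <= L * D ^ 3 * (L + 1) + n * n * (D * n + E) + L * D * n * E.
Proof.
  intros HL. destruct (le_lt_dec L M) as [HLM|HML].
  - destruct (exists_le_average u L HL) as [j [Hj Havg]].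
    assert (Hhead := contraction_telescope 0 L ltac:(lia)).
    assert (Hhead_g := nsum_seq_le g 0 L M ltac:(lia)).
    assert (Htail := contraction_telescope j (M - j) ltac:(lia)).
    assert (Htail_g := nsum_seq_le g j (M - j) M ltac:(lia)).
    assert (Hsmall : L * D * D * u j <= n * (D * n + E)).
    { assert (D * D * (L * u j) <= D * D * nsum u (seq 0 L)) by (apply Nat.mul_le_mono_l; lia).
      assert (n * D * u 0 <= n * D * n) by (apply Nat.mul_le_mono_l; lia).
      assert (n * nsum g (seq 0 L) <= n * E) by (apply Nat.mul_le_mono_l; lia).
      nia. }
    assert (Hcount := nonzero_count_le_prefix_tail u j M ltac:(lia)).
    assert (Htail' : D * D * nsum u (seq j (M - j)) <= n * D * u j + n * E).
    { assert (n * nsum g (seq j (M - j)) <= n * E) by (apply Nat.mul_le_mono_l; lia). lia. }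
    assert (L * D ^ 3 * nonzero_count u (seq 0 (S M))
            <= L * D ^ 3 * (L + 1) + L * D * (D * D * nsum u (seq j (M - j)))).
    { replace (L * D ^ 3 * (L + 1) + L * D * (D * D * nsum u (seq j (M - j))))
        with (L * D ^ 3 * (L + 1 + nsum u (seq j (M - j)))) by (simpl; ring).
      apply Nat.mul_le_mono_l. lia. }
    assert (L * D * (D * D * nsum u (seq j (M - j))) <= L * D * (n * D * u j + n * E))
      by (apply Nat.mul_le_mono_l; lia).
    assert (n * (L * D * D * u j) <= n * (n * (D * n + E))) by (apply Nat.mul_le_mono_l; lia).
    nia.
  - specialize (nonzero_count_le_length u (seq 0 (S M))). rewrite length_seq. nia.
Qed.

End Contraction.

Definition reconstruction (n : nat) (Cs : list graph) (h : graph) : Prop :=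
  is_graph n h /\ deck_contains n h Cs.

Lemma reconstruction_length_le n Cs g : reconstruction n Cs g -> length Cs <= n.
Proof.
  intros [_ [f [Hf [Hinj _]]]].
  exact (proj1 (nsum_injection_bounds n _ f (fun _ => 0) 0 Hf Hinj (fun _ _ => le_n 0))).
Qed.

Definition d_diff (n : nat) (g h : graph) (t : nat) : Z :=
  (Z.of_nat (d_ n h t) - Z.of_nat (d_ n g t))%Z.

Definition kelly_error (n k : nat) (g : graph) (t : nat) : nat :=
  k * (2 + 2 * d_ n g t + 2 * d_ n g (S t)).

Lemma d_diff_recurrence n Cs g h t : reconstruction n Cs g -> reconstruction n Cs h ->
  let a := (Z.of_nat (length Cs) - 1 - Z.of_nat t)%Z in
  let k := Z.of_nat (n - length Cs) in
  (Z.abs (a * d_diff n g h t + (Z.of_nat t + 1) * d_diff n g h (S t))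
   <= Z.of_nat (kelly_error n (n - length Cs) g t)
      + k * (Z.abs (d_diff n g h t) + Z.abs (d_diff n g h (S t))))%Z.
Proof.
  intros [Hg HgCs] [Hh HhCs] a k.
  assert (Eg := card_count_approx n g Cs t Hg HgCs).
  assert (Eh := card_count_approx n h Cs t Hh HhCs).
  cbv zeta in Eg, Eh. fold a k in Eg, Eh. unfold d_diff, kelly_error.
  set (x := Z.of_nat (d_ n h t)) in *. set (x' := Z.of_nat (d_ n h (S t))) in *.
  set (y := Z.of_nat (d_ n g t)) in *. set (y' := Z.of_nat (d_ n g (S t))) in *.
  assert (Hx : (x <= y + Z.abs (x - y))%Z) by lia.
  assert (Hx' : (x' <= y' + Z.abs (x' - y'))%Z) by lia.
  assert (Hk : (0 <= k)%Z) by lia.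
  apply Z.abs_le. apply Z.abs_le in Eg, Eh. nia.
Qed.

Definition max_deviation (n : nat) (Cs : list graph) (g : graph) (U : nat -> nat) : Prop :=
  forall t,
    (exists h, reconstruction n Cs h /\ Z.abs (d_diff n g h t) = Z.of_nat (U t)) /\
    (forall h, reconstruction n Cs h -> (Z.abs (d_diff n g h t) <= Z.of_nat (U t))%Z).

Lemma bounded_nat_pred_max (P : nat -> Prop) (b : nat) : (exists m, P m) ->
  (forall m, P m -> m <= b) -> exists m, P m /\ forall m', P m' -> m' <= m.
Proof.
  induction b as [|b IH]; intros [m0 Hm0] Hb.
  - exists m0. split; auto. intros m' Hm'. assert (m' <= 0) by auto. lia.
  - destruct (classic (P (S b))) as [HP|HP].
    + exists (S b). auto.
    + apply IH; [now exists m0|]. intros m Hm. specialize (Hb m Hm).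
      destruct (Nat.eq_dec m (S b)); [subst; contradiction|lia].
Qed.

Lemma max_deviation_exists n Cs g : reconstruction n Cs g -> exists U, max_deviation n Cs g U.
Proof.
  intros Hg.
  assert (Hmax : forall t, exists u : nat,
    (exists h, reconstruction n Cs h /\ Z.abs (d_diff n g h t) = Z.of_nat u) /\
    (forall h, reconstruction n Cs h -> (Z.abs (d_diff n g h t) <= Z.of_nat u)%Z)).
  { intro t.
    destruct (bounded_nat_pred_max
      (fun u => exists h, reconstruction n Cs h /\ Z.abs (d_diff n g h t) = Z.of_nat u) n)
      as [u [Hu Hmax]].
    - exists 0. exists g. split; auto. unfold d_diff. lia.
    - intros u [h [_ Hu]]. unfold d_diff in Hu.
      specialize (d_le n h t). specialize (d_le n g t). lia.
    - exists u. split; auto. intros h Hh.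
      enough (Z.to_nat (Z.abs (d_diff n g h t)) <= u) by lia.
      apply Hmax. exists h. split; auto. lia. }
  exists (fun t => proj1_sig (constructive_indefinite_description _ (Hmax t))).
  intro t. exact (proj2_sig (constructive_indefinite_description _ (Hmax t))).
Qed.

Lemma Zabs_lincomb_bound (a b x y e k v : Z) : (0 <= k)%Z -> (Z.abs y <= v)%Z ->
  (Z.abs (a * x + b * y) <= e + k * (Z.abs x + Z.abs y))%Z ->
  ((Z.abs a - k) * Z.abs x <= (Z.abs b + k) * v + e)%Z.
Proof.
  intros Hk Hy H.
  assert (Htri := Z.abs_triangle (a * x + b * y) (- (b * y))).
  replace (a * x + b * y + - (b * y))%Z with (a * x)%Z in Htri by ring.
  rewrite Z.abs_opp, !Z.abs_mul in Htri.
  assert (((Z.abs b + k) * Z.abs y <= (Z.abs b + k) * v)%Z) by (apply Z.mul_le_mono_nonneg_l; lia).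
  nia.
Qed.

Lemma nsum_kelly_error_le n k g a l : l <= n -> nsum (kelly_error n k g) (seq a l) <= 6 * k * n.
Proof.
  intros Hl. unfold kelly_error. rewrite nsum_mul_l, !nsum_add, nsum_const, length_seq.
  rewrite !(nsum_mul_l 2 (fun t => d_ n g _)).
  assert (Hd := nsum_d_le n g (seq a l) (seq_NoDup _ _)).
  assert (HdS := nsum_d_le n g (seq (S a) l) (seq_NoDup _ _)).
  rewrite <- seq_shift, nsum_map in HdS.
  change (nsum (fun t => d_ n g t) (seq a l)) with (nsum (d_ n g) (seq a l)). nia.
Qed.

Definition determined (n : nat) (Cs : list graph) (t : nat) : Prop :=
  forall G H, reconstruction n Cs G -> reconstruction n Cs H -> d_ n G t = d_ n H t.

Definition determinedb (n : nat) (Cs : list graph) (t : nat) : bool :=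
  if excluded_middle_informative (determined n Cs t) then true else false.

Section MaxDeviation.

Variables (n : nat) (Cs : list graph) (g : graph) (U : nat -> nat).
Hypothesis Hg : reconstruction n Cs g.
Hypothesis HU : max_deviation n Cs g U.

Lemma max_deviation_zero_determined t : U t = 0 -> determined n Cs t.
Proof.
  intros H0 G H HG HH. destruct (HU t) as [_ Hbound].
  specialize (Hbound G HG) as HbG. specialize (Hbound H HH) as HbH.
  rewrite H0 in HbG, HbH. unfold d_diff in HbG, HbH. lia.
Qed.

Lemma max_deviation_le t : U t <= n.
Proof.
  destruct (HU t) as [[h [_ Hh]] _]. unfold d_diff in Hh.
  specialize (d_le n h t). specialize (d_le n g t). lia.
Qed.

Lemma max_deviation_contract_down t : S t <= length Cs ->
  let m := Z.of_nat (length Cs) in let k := Z.of_nat (n - length Cs) in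
  ((m - 1 - Z.of_nat t - k) * Z.of_nat (U t)
   <= (Z.of_nat t + 1 + k) * Z.of_nat (U (S t))
      + Z.of_nat (kelly_error n (n - length Cs) g t))%Z.
Proof.
  intros Ht m k.
  destruct (HU t) as [[h [Hh <-]] _]. destruct (HU (S t)) as [_ Hbound].
  assert (Hrec := d_diff_recurrence n Cs g h t Hg Hh). cbv zeta in Hrec. fold m k in Hrec.
  assert (Hk : (0 <= k)%Z) by lia.
  specialize (Zabs_lincomb_bound _ _ _ _ _ _ _ Hk (Hbound h Hh) Hrec).
  rewrite !Z.abs_eq by lia. lia.
Qed.

Lemma max_deviation_contract_up t :
  let m := Z.of_nat (length Cs) in let k := Z.of_nat (n - length Cs) in
  ((Z.of_nat t + 1 - k) * Z.of_nat (U (S t))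
   <= (Z.abs (m - 1 - Z.of_nat t) + k) * Z.of_nat (U t)
      + Z.of_nat (kelly_error n (n - length Cs) g t))%Z.
Proof.
  intros m k.
  destruct (HU (S t)) as [[h [Hh <-]] _]. destruct (HU t) as [_ Hbound].
  assert (Hrec := d_diff_recurrence n Cs g h t Hg Hh). cbv zeta in Hrec. fold m k in Hrec.
  rewrite Z.add_comm, (Z.add_comm (Z.abs _)) in Hrec.
  assert (Hk : (0 <= k)%Z) by lia.
  specialize (Zabs_lincomb_bound _ _ _ _ _ _ _ Hk (Hbound h Hh) Hrec).
  rewrite (Z.abs_eq (Z.of_nat t + 1)) by lia. lia.
Qed.

(* Outside the window the two coefficients of the recurrence differ by at least 2W, so U
   contracts (downwards below it, upwards above it) with D = 2W, L = W and E = 6kn. *)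
Lemma max_deviation_nonzero_low W T : 1 <= W ->
  2 * T + 2 * W + 2 * (n - length Cs) <= length Cs ->
  let k := n - length Cs in
  W * (2 * W) ^ 3 * nonzero_count U (seq 0 (S T))
  <= W * (2 * W) ^ 3 * (W + 1) + n * n * (2 * W * n + 6 * k * n)
     + W * (2 * W) * n * (6 * k * n).
Proof.
  intros HW HT k.
  assert (Hm := reconstruction_length_le n Cs g Hg).
  replace (nonzero_count U (seq 0 (S T))) with (nonzero_count (fun j => U (T - j)) (seq 0 (S T))).
  2:{ unfold nonzero_count. rewrite (nsum_rev (fun j => if U j =? 0 then 0 else 1) (S T)).
      apply nsum_ext_in. intros j _. replace (S T - 1 - j) with (T - j) by lia. reflexivity. }
  apply (nonzero_count_contraction (fun j => U (T - j)) (fun j => kelly_error n k g (T - S j))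
    (fun j => Z.of_nat (length Cs) - 1 - Z.of_nat (T - S j) - Z.of_nat k)%Z
    (fun j => Z.of_nat (T - S j) + 1 + Z.of_nat k)%Z n (2 * W) T (6 * k * n)); try lia.
  - intros j Hj. replace (T - j) with (S (T - S j)) by lia.
    apply max_deviation_contract_down. lia.
  - apply max_deviation_le.
  - rewrite <- (nsum_ext_in (fun j => kelly_error n k g (T - 1 - j))) by (intros; f_equal; lia).
    rewrite <- nsum_rev. apply nsum_kelly_error_le. lia.
Qed.

Lemma max_deviation_nonzero_high W T : 1 <= W ->
  2 * W + 2 * (n - length Cs) <= length Cs ->
  length Cs + 2 * (n - length Cs) + 2 * W <= 2 * T + 1 -> T < n ->
  let k := n - length Cs in
  W * (2 * W) ^ 3 * nonzero_count U (seq T (n - T))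
  <= W * (2 * W) ^ 3 * (W + 1) + n * n * (2 * W * n + 6 * k * n)
     + W * (2 * W) * n * (6 * k * n).
Proof.
  intros HW Hm2 HT HTn k.
  assert (Hm := reconstruction_length_le n Cs g Hg).
  replace (nonzero_count U (seq T (n - T)))
    with (nonzero_count (fun j => U (T + j)) (seq 0 (S (n - 1 - T)))).
  2:{ replace (S (n - 1 - T)) with (n - T) by lia. symmetry. apply nsum_seq_shift. }
  apply (nonzero_count_contraction (fun j => U (T + j)) (fun j => kelly_error n k g (T + j))
    (fun j => Z.of_nat (T + j) + 1 - Z.of_nat k)%Z
    (fun j => Z.abs (Z.of_nat (length Cs) - 1 - Z.of_nat (T + j)) + Z.of_nat k)%Z
    n (2 * W) (n - 1 - T) (6 * k * n)); try lia.
  - intros j Hj. rewrite Nat.add_succ_r. apply max_deviation_contract_up.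
  - apply max_deviation_le.
  - rewrite <- (nsum_seq_shift (kelly_error n k g)). apply nsum_kelly_error_le. lia.
Qed.

Lemma undetermined_le_nonzero_count l :
  length (filter (fun t => negb (determinedb n Cs t)) l) <= nonzero_count U l.
Proof.
  rewrite length_filter_nsum. apply nsum_le_in. intros t _. unfold determinedb.
  destruct (excluded_middle_informative (determined n Cs t)) as [|Hund]; simpl; [lia|].
  destruct (Nat.eqb_spec (U t) 0); [|lia].
  exfalso. eauto using max_deviation_zero_determined.
Qed.

End MaxDeviation.

Lemma undetermined_count_le n Cs W : 1 <= W -> 3 * (n - length Cs) + 2 * W + 4 <= n ->
  let k := n - length Cs in
  let region := W * (2 * W) ^ 3 * (W + 1) + n * n * (2 * W * n + 6 * k * n)
                + W * (2 * W) * n * (6 * k * n) in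
  W * (2 * W) ^ 3 * length (filter (fun t => negb (determinedb n Cs t)) (seq 0 n))
  <= W * (2 * W) ^ 3 * (2 * k + 2 * W) + 2 * region.
Proof.
  intros HW Hn k region.
  destruct (classic (exists g, reconstruction n Cs g)) as [[g Hg]|Hnone].
  2:{ rewrite length_filter_nsum, (nsum_ext_in _ (fun _ => 0)), nsum_const; [lia|].
      intros t _. unfold determinedb.
      destruct (excluded_middle_informative (determined n Cs t)) as [|Hund]; [reflexivity|].
      exfalso. apply Hund. intros G H HG. exfalso. eauto. }
  destruct (max_deviation_exists n Cs g Hg) as [U HU].
  assert (Hm := reconstruction_length_le n Cs g Hg).
  set (m := length Cs) in *.
  set (T1 := (m - 2 * W - 2 * k) / 2).
  assert (HT1 := Nat.div_mod (m - 2 * W - 2 * k) 2 ltac:(lia)).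
  assert (HT1' := Nat.mod_upper_bound (m - 2 * W - 2 * k) 2 ltac:(lia)). fold T1 in HT1, HT1'.
  assert (Hk : k + m = n) by (unfold k, m in *; lia).
  assert (Hsplit : seq 0 n = seq 0 (S T1) ++ seq (S T1) (2 * k + 2 * W)
                             ++ seq (S T1 + (2 * k + 2 * W)) (n - (S T1 + (2 * k + 2 * W)))).
  { rewrite <- !seq_app. f_equal. lia. }
  assert (Hlow := max_deviation_nonzero_low n Cs g U Hg HU W T1 HW ltac:(lia)).
  assert (Hhigh := max_deviation_nonzero_high n Cs g U Hg HU W (S T1 + (2 * k + 2 * W)) HW
                     ltac:(lia) ltac:(lia) ltac:(lia)).
  assert (Hmid := nonzero_count_le_length U (seq (S T1) (2 * k + 2 * W))).
  set (T2 := S T1 + (2 * k + 2 * W)) in *.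
  assert (Hund : length (filter (fun t => negb (determinedb n Cs t)) (seq 0 n))
      <= nonzero_count U (seq 0 (S T1)) + nonzero_count U (seq (S T1) (2 * k + 2 * W))
         + nonzero_count U (seq T2 (n - T2))).
  { etransitivity; [apply (undetermined_le_nonzero_count n Cs g U HU)|].
    rewrite Hsplit. unfold nonzero_count. rewrite !nsum_app. lia. }
  rewrite length_seq in Hmid.
  apply (Nat.mul_le_mono_l _ _ (W * (2 * W) ^ 3)) in Hund, Hmid.
  rewrite !Nat.mul_add_distr_l in Hund. cbv zeta in Hlow, Hhigh. fold k m in Hlow, Hhigh. lia.
Qed.


Open Scope R_scope.

Lemma exists_nat_between x : 0 <= x -> exists W : nat, x <= INR W <= x + 1.
Proof.
  intros Hx. destruct (archimed x) as [Hup1 Hup2].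
  exists (Z.to_nat (up x)). rewrite INR_IZR_INZ, Z2Nat.id; [lra|].
  apply le_IZR. lra.
Qed.

Lemma Rpower_gamma_bounds beta x : 0 <= beta -> beta < 1 -> 1 <= x ->
  let P := Rpower x (3/4 + 1/4 * beta) in
  1 <= P /\ Rpower x beta * (x * x) <= P * P * P /\
  x * x * x <= P * P * P * P /\ x <= P * P.
Proof.
  intros hb0 hb1 Hx P.
  assert (E1 : x = Rpower x 1) by (rewrite Rpower_1; lra).
  repeat split.
  - rewrite <- (Rpower_O x) by lra. apply Rle_Rpower; lra.
  - rewrite E1 at 2 3. unfold P. rewrite <- !Rpower_plus. apply Rle_Rpower; lra.
  - rewrite E1 at 1 2 3. unfold P. rewrite <- !Rpower_plus. apply Rle_Rpower; lra.
  - rewrite E1 at 1. unfold P. rewrite <- !Rpower_plus. apply Rle_Rpower; lra.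
Qed.

(* With W ~ P = n^gamma, each term of the bound of [undetermined_count_le] is O(W^4 P). *)
Lemma undetermined_count_real (n k W P C x : R) :
  1 <= P -> P <= W <= P + 1 -> 0 <= k -> k <= C * P -> k * (n * n) <= C * (P * P * P) ->
  n * n * n <= P * P * P * P -> n <= P * P -> 0 <= n -> 0 < C ->
  W * (2 * W) ^ 3 * x
  <= W * (2 * W) ^ 3 * (2 * k + 2 * W)
     + 2 * (W * (2 * W) ^ 3 * (W + 1) + n * n * (2 * W * n + 6 * k * n)
            + W * (2 * W) * n * (6 * k * n)) ->
  x <= (20 + 10 * C) * P.
Proof.
  intros HP1 [HPW HWP] Hk HkP Hkn Hn3 Hn2 Hn0 HC H.
  set (W4 := W * W * W * W).
  assert (HW2 : P * P <= W * W) by nra.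
  assert (HW4 : P * P * P * P <= W4).
  { replace W4 with ((W * W) * (W * W)) by (unfold W4; ring).
    replace (P * P * P * P) with ((P * P) * (P * P)) by ring.
    apply Rmult_le_compat; nra. }
  assert (HW4pos : 0 < W4) by (unfold W4; repeat apply Rmult_lt_0_compat; lra).
  assert (E : W * (2 * W) ^ 3 = 8 * W4) by (unfold W4; ring).
  rewrite E in H.
  assert (H1 : 4 * W * (n * n * n) <= 8 * P * W4).
  { assert (4 * W * (n * n * n) <= 4 * W * W4) by (apply Rmult_le_compat_l; lra).
    assert (4 * W * W4 <= 8 * P * W4) by (apply Rmult_le_compat_r; lra). lra. }
  assert (H2 : 12 * k * (n * n * n) <= 12 * C * P * W4).
  { assert (k * (n * n) * n <= C * (P * P * P) * (P * P)) by (apply Rmult_le_compat; nra).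
    assert (C * P * (P * P * P * P) <= C * P * W4) by (apply Rmult_le_compat_l; nra). nra. }
  assert (H3 : 24 * (W * W) * (k * (n * n)) <= 24 * C * P * W4).
  { assert ((W * W) * (k * (n * n)) <= (W * W) * (C * (P * P * P))) by (apply Rmult_le_compat_l; nra).
    assert (C * P * (P * P * (W * W)) <= C * P * W4) by (apply Rmult_le_compat_l; unfold W4; nra).
    nra. }
  apply (Rmult_le_reg_l (8 * W4)); [lra|]. nra.
Qed.

Lemma undetermined_count_power_bound beta C n k Cs :
  0 <= beta -> beta < 1 -> 0 < C -> (1 <= n)%nat ->
  INR k <= C * Rpower (INR n) beta -> length Cs = (n - k)%nat ->
  INR (length (filter (fun t => negb (determinedb n Cs t)) (seq 0 n)))
  <= (20 + 10 * C) * Rpower (INR n) (3/4 + 1/4 * beta).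
Proof.
  intros hb0 hb1 hC Hn Hk Hlen.
  assert (Hn1 : 1 <= INR n) by (apply (le_INR 1); lia).
  destruct (Rpower_gamma_bounds beta (INR n) hb0 hb1 Hn1) as [HP1 [HP3 [HP4 HP2]]].
  set (P := Rpower (INR n) (3/4 + 1/4 * beta)) in *.
  assert (HkP : INR k <= C * P).
  { enough (Rpower (INR n) beta <= P) by nra. apply Rle_Rpower; lra. }
  assert (Hkn : INR k * (INR n * INR n) <= C * (P * P * P)).
  { enough (INR k * (INR n * INR n) <= C * Rpower (INR n) beta * (INR n * INR n)) by nra.
    apply Rmult_le_compat_r; nra. }
  destruct (exists_nat_between P ltac:(lra)) as [W HW].
  assert (HW1 : (1 <= W)%nat) by (apply INR_le; simpl; lra).
  set (count := length (filter (fun t => negb (determinedb n Cs t)) (seq 0 n))).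
  destruct (le_lt_dec (3 * k + 2 * W + 4) n) as [Hbig|Hsmall].
  - replace k with (n - length Cs)%nat in Hbig by lia.
    assert (H := undetermined_count_le n Cs W HW1 Hbig). cbv zeta in H. fold count in H.
    replace (n - length Cs)%nat with k in H by lia.
    apply le_INR in H.
    repeat (rewrite mult_INR in H || rewrite plus_INR in H || rewrite pow_INR in H).
    apply (undetermined_count_real (INR n) (INR k) (INR W) P C); auto using pos_INR; try lra.
    simpl (INR 1) in H. simpl (INR 2) in H. simpl (INR 6) in H. lra.
  - assert (Hcount : (count <= n)%nat).
    { unfold count. rewrite <- (length_seq n 0) at 2. apply filter_length_le. }
    apply le_INR in Hcount. apply lt_INR in Hsmall.
    rewrite !plus_INR, !mult_INR in Hsmall. simpl (INR 2) in Hsmall. simpl (INR 3) in Hsmall.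
    simpl (INR 4) in Hsmall. nra.
Qed.

Theorem lemma6 (beta C : R) (hb0 : 0 <= beta) (hb1 : beta < 1) (hC : 0 < C) :
  exists c : R, 0 < c /\
  exists N : nat, forall n k : nat, (N <= n)%nat ->
    INR k <= C * Rpower (INR n) beta ->
    forall Cs : list graph,
      length Cs = (n - k)%nat ->
      Forall (is_graph (n - 1)) Cs ->
      exists J : list nat,
        NoDup J /\ (forall t, In t J -> (t < n)%nat) /\
        INR (length J) >= INR n - c * Rpower (INR n) (3/4 + 1/4 * beta) /\
        forall G H : graph,
          is_graph n G -> is_graph n H ->
          deck_contains n G Cs -> deck_contains n H Cs ->
          forall t, In t J -> d_ n G t = d_ n H t.
Proof.
  exists (20 + 10 * C). split; [lra|]. exists 1%nat.
  intros n k Hn Hk Cs Hlen _.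
  exists (filter (determinedb n Cs) (seq 0 n)).
  split; [apply NoDup_filter, seq_NoDup|].
  split; [intros t Ht; apply filter_In in Ht as [Ht _]; apply in_seq in Ht; lia|].
  split.
  - assert (Hsum := filter_length (determinedb n Cs) (seq 0 n)).
    rewrite length_seq in Hsum. apply (f_equal INR) in Hsum. rewrite plus_INR in Hsum.
    assert (Hbound := undetermined_count_power_bound beta C n k Cs hb0 hb1 hC Hn Hk Hlen).
    lra.
  - intros G H HG HH HGCs HHCs t Ht. apply filter_In in Ht as [_ Ht].
    unfold determinedb in Ht. destruct (excluded_middle_informative _) as [Hdet|]; [|discriminate].
    apply Hdet; split; auto.
Qed.
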